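(* For $n\ge 1$ and all $k\ge 0$, $$P(n+1,k)=(n+1-k)S(n,k),$$ equivalently $P_{n+1}(x)=(n+1)S_n(x)-xS_n'(x)$. Furthermore, for $n\ge1$ and $0\le k\le\lfloor n/2\rfloor$, $$P(n+1,k)=\frac{(k+1)(n-k+1)}{n-k}P(n,k)+(n-2k+1)P(n,k-1).$$ In particular, $P(n,0)=n$ and $P(n,1)=(n-1)(2^{n-1}-n)$ for $n\ge 1$.
   Context: For a permutation $\pi$ of $[n]=\{1,\dots,n\}$, ${\rm des}(\pi)=\#\{i\in[n-1]:\pi(i)>\pi(i+1)\}$. A double descent is an index $i\in[n-2]$ with $\pi(i)>\pi(i+1)>\pi(i+2)$; $\pi$ is simsun if for every $k\in[n]$ the subword of $\pi$ consisting of the letters in $[k]$ (in order of appearance) has no double descents. Let $\mathcal{RS}_n$ be the set of simsun permutations of $[n]$, $S(n,k)=\#\{\pi\in\mathcal{RS}_n:{\rm des}(\pi)=k\}$, $S_n(x)=\sum_kS(n,k)x^k$. An interior peak of $\pi$ is an index $i\in\{2,\dots,n-1\}$ with $\pi(i-1)<\pi(i)>\pi(i+1)$; ${\rm pk}(\pi)$ is their number. Let $P(n,k)=\#\{\pi\in\mathcal{RS}_n:{\rm pk}(\pi)=k\}$ (with $P(n,-1)=0$) and $P_n(x)=\sum_kP(n,k)x^k$. *)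

From mathcomp Require Import all_boot all_order all_algebra all_fingroup.
Set Implicit Arguments. Unset Strict Implicit. Unset Printing Implicit Defensive.
Import GRing.Theory Num.Theory.

(* A permutation pi of [n] is represented by p : {perm 'I_n}; its one-line
   word is [p 0; p 1; ...; p (n-1)] with values in {0,...,n-1}, i.e. the
   letter j+1 of [n] is encoded as j.  Order relations are unaffected. *)
Definition word n (p : {perm 'I_n}) : seq nat := [seq val (p i) | i <- enum 'I_n].

Definition des_seq (w : seq nat) : nat :=
  \sum_(0 <= i < (size w).-1) (nth 0 w i > nth 0 w i.+1).

Definition has_ddes (w : seq nat) : bool :=
  [exists i : 'I_(size w),
     (i.+2 < size w) && (nth 0 w i > nth 0 w i.+1) && (nth 0 w i.+1 > nth 0 w i.+2)].

Definition pk_seq (w : seq nat) : nat :=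
  \sum_(1 <= i < (size w).-1) ((nth 0 w i.-1 < nth 0 w i) && (nth 0 w i > nth 0 w i.+1)).

(* simsun: for every k in [n], the subword of letters in [k] (encoded values < k)
   has no double descent *)
Definition simsun n (p : {perm 'I_n}) : bool :=
  [forall k : 'I_n.+1, ~~ has_ddes [seq x <- word p | x < k]].

Definition des n (p : {perm 'I_n}) : nat := des_seq (word p).
Definition pk n (p : {perm 'I_n}) : nat := pk_seq (word p).

Definition Snk (n k : nat) : nat := #|[set p : {perm 'I_n} | simsun p && (des p == k)]|.
Definition Pnk (n k : nat) : nat := #|[set p : {perm 'I_n} | simsun p && (pk p == k)]|.

Definition Pprev (n k : nat) : nat := if k is k'.+1 then Pnk n k' else 0.

(* Generating polynomials S_n(x), P_n(x) over int; des <= n-1, pk <= n so the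
   truncations below lose no terms. *)
Definition Spoly (n : nat) : {poly int} := \poly_(k < n.+1) (Snk n k)%:R%R.
Definition Ppoly (n : nat) : {poly int} := \poly_(k < n.+1) (Pnk n k)%:R%R.

From mathcomp Require Import all_boot all_order all_algebra all_fingroup.
From mathcomp Require Import zify.
Import GRing.Theory Num.Theory.
Set Implicit Arguments. Unset Strict Implicit. Unset Printing Implicit Defensive.

(* Every permutation of [n+1] arises exactly once by inserting the largest
   letter into one of the n+1 slots of a permutation w of [n], and the result
   is simsun iff w is simsun and the slot does not immediately precede a
   descent of w.  If w is simsun with d descents, then d slots lie inside a
   descent and so does the last slot (descents unchanged), d slots precede a
   descent (forbidden), and the remaining n - 2d slots create a new descent:
   S(n+1,k) = (k+1) S(n,k) + (n-2k+2) S(n,k-1).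
   In a word without double descents every descent other than an initial one
   starts at a peak, so P(n,k) = A(n,k) + B(n,k+1), where A and B count the
   simsun words with k descents starting with an ascent, resp. a descent.  The
   insertion count restricted to B shows by induction that B(n+1,k) is the
   second summand (n-2k+2) S(n,k-1) above, hence A(n+1,k) = (k+1) S(n,k) and
   P(n+1,k) = (k+1) S(n,k) + (n-2k) S(n,k) = (n+1-k) S(n,k). *)

Definition head_descent (w : seq nat) : bool :=
  if w is x :: y :: _ then y < x else false.

Fixpoint descents (w : seq nat) : nat :=
  if w is _ :: s then head_descent w + descents s else 0.

Fixpoint double_descent (w : seq nat) : bool :=
  if w is _ :: s then (head_descent w && head_descent s) || double_descent s
  else false.

Fixpoint peaks (w : seq nat) : nat :=
  match w with
  | x :: ((y :: z :: _) as s) => ((x < y) && (z < y)) + peaks s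
  | _ => 0
  end.

Lemma des_seqE w : des_seq w = descents w.
Proof.
rewrite /des_seq; elim: w => [|x s IH]; first by rewrite big_geq.
case: s IH => [|y s] IH /=; first by rewrite big_geq.
by rewrite big_nat_recl //; congr (_ + _).
Qed.

Lemma pk_seqE w : pk_seq w = peaks w.
Proof.
rewrite /pk_seq; elim: w => [|x s IH]; first by rewrite big_geq.
case: s IH => [|y s] IH; first by rewrite big_geq.
case: s IH => [|z s] IH; first by rewrite big_geq.
transitivity (((x < y) && (z < y)) + pk_seq [:: y, z & s]); last by rewrite /pk_seq IH.
rewrite /= big_nat_recl //; congr (_ + _).
by apply: eq_big_nat => -[].
Qed.

Lemma double_descentP w :
  reflect (exists i, (i.+2 < size w) && (nth 0 w i.+1 < nth 0 w i)
                       && (nth 0 w i.+2 < nth 0 w i.+1))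
          (double_descent w).
Proof.
elim: w => [|x s IH]; first by apply: ReflectF => -[].
case: s IH => [|y s] IH; first by apply: ReflectF => -[].
case: s IH => [|z s] IH; first by rewrite /= andbF; apply: ReflectF => -[[|[|i]]].
apply: (iffP orP) => [[/andP[yx zy] | /IH[i hi]] | [[|i] hi]].
- by exists 0; move: yx zy => /= -> ->.
- by exists i.+1.
- by left; case/andP: hi => /andP[_ yx] zy; apply/andP.
- by right; apply/IH; exists i.
Qed.

Lemma has_ddesE w : has_ddes w = double_descent w.
Proof.
apply/existsP/double_descentP => [[i hi] | [i hi]]; first by exists i.
have i_lt : i < size w by case/andP: hi => /andP[/ltnW/ltnW].
by exists (Ordinal i_lt).
Qed.

Definition simsun_word n (w : seq nat) : bool :=
  all (fun k => ~~ double_descent [seq x <- w | x < k]) (iota 0 n.+1).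

Lemma simsunE n (p : {perm 'I_n}) : simsun p = simsun_word n (word p).
Proof.
apply/forallP/allP => [simp k | simw k].
- by rewrite mem_iota add0n => k_lt; rewrite -has_ddesE (simp (Ordinal k_lt)).
- by rewrite has_ddesE simw // mem_iota add0n ltn_ord.
Qed.

Lemma perm_word_iota n (p : {perm 'I_n}) : perm_eq (word p) (iota 0 n).
Proof.
rewrite /word -val_enum_ord (map_comp val p); apply: perm_map.
apply: uniq_perm; [by rewrite map_inj_uniq ?enum_uniq //; apply: perm_inj
                  | exact: enum_uniq |].
by move=> i; rewrite mem_enum; apply/mapP; exists ((p^-1)%g i); rewrite ?mem_enum ?permKV.
Qed.

Lemma word_inj n : injective (@word n).
Proof.
by move=> p q /eq_in_map pq; apply/permP => i; apply: val_inj; rewrite pq ?mem_enum.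
Qed.

Lemma card_perm_word n (Q : pred (seq nat)) :
  #|[set p : {perm 'I_n} | Q (word p)]| = \sum_(w <- permutations (iota 0 n)) Q w.
Proof.
rewrite cardsE -sum1_card big_mkcond /=.
have words_uniq : uniq [seq word p | p <- enum {perm 'I_n}].
  by rewrite map_inj_uniq ?enum_uniq //; apply: word_inj.
have words_perm : perm_eq [seq word p | p <- enum {perm 'I_n}] (permutations (iota 0 n)).
  apply: uniq_perm; rewrite ?permutations_uniq //.
  apply: (uniq_min_size words_uniq _ _).2 => [w /mapP[p _ ->]|].
    by rewrite mem_permutations perm_word_iota.
  by rewrite size_map -cardE card_Sn size_permutations ?iota_uniq // size_iota.
rewrite -(perm_big _ words_perm) big_map big_enum /=; apply: eq_bigr => p _.
by rewrite unfold_in; case: (Q _).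
Qed.

Definition count_simsun n (Q : pred (seq nat)) : nat :=
  \sum_(w <- permutations (iota 0 n)) (simsun_word n w && Q w).

Lemma SnkE n k : Snk n k = count_simsun n (fun w => descents w == k).
Proof.
rewrite /Snk /count_simsun.
rewrite -(card_perm_word _ (fun w => simsun_word n w && (descents w == k))).
apply: eq_card => p.
by rewrite !inE simsunE /des des_seqE.
Qed.

Lemma PnkE n k : Pnk n k = count_simsun n (fun w => peaks w == k).
Proof.
rewrite /Pnk /count_simsun.
rewrite -(card_perm_word _ (fun w => simsun_word n w && (peaks w == k))).
apply: eq_card => p.
by rewrite !inE simsunE /pk pk_seqE.
Qed.

Definition insert_at j x (w : seq nat) : seq nat := take j w ++ x :: drop j w.

Lemma insert_at0 x w : insert_at 0 x w = x :: w.
Proof. by rewrite /insert_at take0 drop0. Qed.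

Lemma insert_atS j x a w : insert_at j.+1 x (a :: w) = a :: insert_at j x w.
Proof. by []. Qed.

Lemma insert_at_nil j x : insert_at j x [::] = [:: x].
Proof. by case: j. Qed.

Lemma perm_insert_at j x w : perm_eq (insert_at j x w) (x :: w).
Proof. by rewrite /insert_at -cat1s perm_catCA /= cat_take_drop. Qed.

Lemma index_insert_at j x w :
  x \notin w -> j <= size w -> index x (insert_at j x w) = j.
Proof.
move=> xw jw; rewrite /insert_at index_cat ifN; last by apply: contra xw => /mem_take.
by rewrite /= eqxx addn0 size_takel.
Qed.

Lemma rem_insert_at j x w : x \notin w -> j <= size w -> rem x (insert_at j x w) = w.
Proof.
move=> xw jw; rewrite remE index_insert_at //.
rewrite take_size_cat ?size_takel // /insert_at -cat_rcons.
by rewrite drop_size_cat ?size_rcons ?size_takel // cat_take_drop.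
Qed.

Lemma insert_at_rem x t : x \in t -> insert_at (index x t) x (rem x t) = t.
Proof.
move=> xt; have it : index x t < size t by rewrite index_mem.
rewrite /insert_at remE take_size_cat ?size_takel 1?ltnW //.
rewrite drop_size_cat ?size_takel 1?ltnW //.
by rewrite -[X in _ ++ X :: _](nth_index 0 xt) -drop_nth // cat_take_drop.
Qed.

Lemma perm_iotaS n : perm_eq (iota 0 n.+1) (n :: iota 0 n).
Proof. by rewrite -addn1 iotaD add0n /= cats1 perm_rcons. Qed.

Lemma perm_permutations_insert n :
  perm_eq (permutations (iota 0 n.+1))
          [seq insert_at j n w | w <- permutations (iota 0 n), j <- iota 0 n.+1].
Proof.
have n_notin w : w \in permutations (iota 0 n) -> n \notin w.
  by rewrite mem_permutations => /perm_mem ->; rewrite mem_iota ltnn andbF.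
have size_w w : w \in permutations (iota 0 n) -> size w = n.
  by rewrite mem_permutations => /perm_size ->; rewrite size_iota.
apply: uniq_perm; first exact: permutations_uniq.
  apply: allpairs_uniq; rewrite ?permutations_uniq ?iota_uniq //.
  have mem_pair w j : (w, j) \in [seq (x, y) | x <- permutations (iota 0 n), y <- iota 0 n.+1] ->
      (w \in permutations (iota 0 n)) && (j <= size w).
    case/allpairsP => -[v i] [wv ji [-> ->]].
    by move: ji; rewrite wv size_w // mem_iota add0n ltnS.
  move=> [w j] [w' j'] /mem_pair/andP[wp jw] /mem_pair/andP[wp' jw'] /= eq_ins.
  have [nw nw'] := (n_notin _ wp, n_notin _ wp').
  have := congr1 (index n) eq_ins; have := congr1 (rem n) eq_ins.
  by rewrite !rem_insert_at ?index_insert_at // => -> ->.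
move=> t; rewrite mem_permutations; apply/idP/allpairsP => [t_perm | [[w j] /= [wp _ ->]]].
- have nt : n \in t by rewrite (perm_mem t_perm) mem_iota ltnSn.
  exists (rem n t, index n t); split; last by rewrite /= insert_at_rem.
    rewrite mem_permutations -(perm_cons n) -(permPl (perm_to_rem nt)) (permPl t_perm).
    exact: perm_iotaS.
  by rewrite mem_iota -(size_iota 0 n.+1) -(perm_size t_perm) index_mem.
- rewrite (permPl (perm_insert_at j n w)) perm_sym (permPl (perm_iotaS n)).
  by rewrite perm_cons perm_sym -mem_permutations.
Qed.

Lemma sum_permutations_insert n (F : seq nat -> nat) :
  \sum_(t <- permutations (iota 0 n.+1)) F t =
  \sum_(w <- permutations (iota 0 n)) \sum_(0 <= j < n.+1) F (insert_at j n w).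
Proof.
rewrite (perm_big _ (perm_permutations_insert n)) big_allpairs_dep /=.
by apply: eq_bigr => w _; rewrite /index_iota subn0.
Qed.

Lemma perm_iota_lt n w : perm_eq w (iota 0 n) -> all (fun y => y < n) w.
Proof. by move=> wn; apply/allP => y; rewrite (perm_mem wn) mem_iota. Qed.

Lemma simsun_word_insert n j w : perm_eq w (iota 0 n) ->
  simsun_word n.+1 (insert_at j n w) = simsun_word n w && ~~ double_descent (insert_at j n w).
Proof.
move=> wn; rewrite /simsun_word -addn1 iotaD all_cat add0n; congr (_ && _).
  apply: eq_in_all => k; rewrite mem_iota add0n ltnS => /andP[_ kn].
  by rewrite /insert_at filter_cat /= ltnNge kn -filter_cat cat_take_drop.
have ins_lt : all (fun y => y < n.+1) (insert_at j n w).
  rewrite (perm_all _ (perm_insert_at _ _ _)) /= ltnSn.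
  by apply: sub_all (perm_iota_lt wn) => y /ltnW.
by rewrite /= andbT (all_filterP ins_lt).
Qed.

Lemma simsun_word_free n w :
  perm_eq w (iota 0 n) -> simsun_word n w -> ~~ double_descent w.
Proof.
move=> wn /allP/(_ n); rewrite mem_iota ltnSn (all_filterP (perm_iota_lt wn)).
exact.
Qed.

Lemma descents_cons a s : descents (a :: s) = head_descent (a :: s) + descents s.
Proof. by []. Qed.

Lemma double_descent_cons a s :
  double_descent (a :: s) = (head_descent (a :: s) && head_descent s) || double_descent s.
Proof. by []. Qed.

Lemma head_descent_size s : head_descent s -> 1 < size s.
Proof. by case: s => [|a [|b s]]. Qed.

Lemma head_descent_drop_lt i w : head_descent (drop i w) -> i.+1 < size w.
Proof. by move/head_descent_size; rewrite size_drop; lia. Qed.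

Lemma double_descent_drop i w :
  head_descent (drop i w) -> head_descent (drop i.+1 w) -> double_descent w.
Proof.
elim: w i => [|a w IH] [|i] //=; first by rewrite drop0 => -> ->.
by move=> hd1 hd2; rewrite (IH i hd1 hd2) orbT.
Qed.

(* Slot j is the gap before w_j, where [insert_at j] puts the new letter; it
   lies inside a descent when w_(j-1) > w_j. *)
Definition slot_descent j (w : seq nat) : bool := (0 < j) && head_descent (drop j.-1 w).

Lemma slot_descent_lt j w : slot_descent j w -> j < size w.
Proof. by case/andP=> j_gt0 /head_descent_drop_lt; rewrite prednK. Qed.

Lemma slot_descent_free j w :
  ~~ double_descent w -> slot_descent j w -> ~~ head_descent (drop j w).
Proof.
move=> free /andP[j_gt0 hd1]; apply: contra free.
by move=> hd2; apply: (double_descent_drop hd1); rewrite prednK.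
Qed.

Lemma sum_head_descent_drop w :
  \sum_(0 <= j < (size w).+1) head_descent (drop j w) = descents w.
Proof.
elim: w => [|a w IH]; first by rewrite big_nat1.
by rewrite big_nat_recl // drop0 descents_cons -IH.
Qed.

Lemma sum_slot_descent w : \sum_(0 <= j < (size w).+1) slot_descent j w = descents w.
Proof.
rewrite big_nat_recl // -sum_head_descent_drop big_nat_recr //=.
by rewrite drop_size addn0.
Qed.

Lemma sum_free_slots w : ~~ double_descent w ->
  \sum_(0 <= j < (size w).+1)
      [&& j < size w, ~~ slot_descent j w & ~~ head_descent (drop j w)]
    + (descents w).*2 = size w.
Proof.
move=> free.
have slots : \sum_(0 <= j < (size w).+1) (j < size w) = size w.
  rewrite big_nat_recr //= ltnn addn0 (eq_big_nat _ _ (F2 := fun _ => 1)).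
    by rewrite sum_nat_const_nat subn0 muln1.
  by move=> j /andP[_ ->].
rewrite -addnn -{1}sum_slot_descent -sum_head_descent_drop -!big_split /= -[RHS]slots.
apply: eq_big_nat => j _.
move: (@slot_descent_lt j w) (@head_descent_drop_lt j w) (@slot_descent_free j w free); lia.
Qed.

Lemma descents_double_le w : ~~ double_descent w -> (descents w).*2 <= size w.
Proof. by move/sum_free_slots <-; rewrite leq_addl. Qed.

Section InsertMax.

Variable x : nat.

Lemma head_descent_cons_insert a j w : a < x ->
  head_descent (a :: insert_at j x w) = (0 < j) && head_descent (a :: w).
Proof.
move=> ax; case: j => [|j]; first by rewrite insert_at0 /= ltnNge (ltnW ax).
by case: w => [|b w]; rewrite ?insert_at_nil ?insert_atS //= ltnNge (ltnW ax).
Qed.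

Lemma head_descent_insert j w : all (fun y => y < x) w ->
  head_descent (insert_at j x w) = if j is 0 then w != [::] else (1 < j) && head_descent w.
Proof.
case: j => [|j]; first by case: w => [|b w] //= /andP[-> _].
case: w => [|b w]; first by rewrite insert_at_nil andbF.
by rewrite insert_atS => /andP[bx _]; apply: head_descent_cons_insert.
Qed.

Lemma double_descent_insert j w : all (fun y => y < x) w -> ~~ double_descent w ->
  double_descent (insert_at j x w) = head_descent (drop j w).
Proof.
elim: w j => [|a w IH] j; first by rewrite insert_at_nil; case: j.
rewrite double_descent_cons => /andP[ax wx] /norP[no_dd_head free].
case: j => [|j].
  rewrite insert_at0 drop0 double_descent_cons double_descent_cons.
  by rewrite (negbTE no_dd_head) (negbTE free) !orbF [head_descent (x :: _)]/= ax.
rewrite insert_atS double_descent_cons IH // head_descent_cons_insert // head_descent_insert //.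
by case: j => [|j] //; rewrite andbACA (negbTE no_dd_head) andbF.
Qed.

Lemma descents_insert j w : all (fun y => y < x) w ->
  descents (insert_at j x w) + slot_descent j w = descents w + (j < size w).
Proof.
elim: w j => [|a w IH] j; first by rewrite insert_at_nil; case: j.
case/andP=> ax wx; case: j => [|j].
  by rewrite insert_at0 descents_cons /= ax addn0 add1n addn1.
rewrite insert_atS !descents_cons head_descent_cons_insert //.
by have := IH j wx; rewrite /slot_descent; case: j => [|j] /=; lia.
Qed.

End InsertMax.

Definition insertions x w (Q : pred (seq nat)) : nat :=
  \sum_(0 <= j < (size w).+1)
     (~~ double_descent (insert_at j x w) && Q (insert_at j x w)).

Lemma insertions_descents x w D : all (fun y => y < x) w -> ~~ double_descent w ->
  insertions x w (fun t => descents t == D) =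
  (D == descents w) * (descents w).+1
  + (D == (descents w).+1) * (size w - (descents w).*2).
Proof.
move=> wx free; have free_slots := sum_free_slots free.
have last_slot : \sum_(0 <= j < (size w).+1) (size w <= j) = 1.
  rewrite big_nat_recr //= leqnn big1_seq // => j /andP[_].
  by rewrite mem_index_iota => /andP[_ jw]; rewrite leqNgt jw.
rewrite /insertions (eq_big_nat _ _ (F2 := fun j =>
    (D == descents w) * ((size w <= j) + slot_descent j w)
    + (D == (descents w).+1)
      * [&& j < size w, ~~ slot_descent j w & ~~ head_descent (drop j w)])); last first.
  move=> j _; rewrite double_descent_insert //.
  move: (descents_insert j wx) (@slot_descent_lt j w) (@head_descent_drop_lt j w).
  move: (@slot_descent_free j w free); lia.
rewrite big_split -!big_distrr big_split /= last_slot sum_slot_descent add1n.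
by congr (_ + _ * _); lia.
Qed.

Lemma insertions_head_descent x w D :
  all (fun y => y < x) w -> ~~ double_descent w -> 0 < size w ->
  insertions x w (fun t => (descents t == D) && head_descent t) =
  if head_descent w
  then (D == descents w) * descents w
       + (D == (descents w).+1) * (size w - (descents w).*2)
  else D == (descents w).+1.
Proof.
move=> wx free w_gt0; have total := insertions_descents D wx free.
have w_nil : w != [::] by case: w w_gt0 {wx free total}.
have des0 := descents_insert 0 wx; have des1 := descents_insert 1 wx.
have dd0 := double_descent_insert 0 wx free; have dd1 := double_descent_insert 1 wx free.
have free1 := @slot_descent_free 1 w free.
have size_ge2 := @head_descent_size w.
rewrite /slot_descent /= drop0 in des0 des1 dd0 free1.
rewrite /insertions in total *.
case: (size w) w_gt0 size_ge2 des0 des1 total => [|m] // _ size_ge2 des0 des1.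
rewrite !big_nat_recl // !head_descent_insert //= w_nil dd0 dd1 => total.
rewrite (eq_bigr (fun i => head_descent w * (~~ double_descent (insert_at i.+2 x w)
                                           && (descents (insert_at i.+2 x w) == D)))).
  rewrite -big_distrr /=; case: (boolP (head_descent w)) => hw in total *.
    by rewrite (negbTE (free1 hw)) in total *; move: (size_ge2 hw); lia.
  by lia.
move=> i _; rewrite head_descent_insert //.
by case: (head_descent w); rewrite /= ?andbT ?andbF ?mul1n ?mul0n.
Qed.

Lemma count_simsun_insert n Q : count_simsun n.+1 Q =
  \sum_(w <- permutations (iota 0 n)) simsun_word n w * insertions n w Q.
Proof.
rewrite /count_simsun sum_permutations_insert; apply: eq_big_seq => w.
rewrite mem_permutations => wn; rewrite /insertions (perm_size wn) size_iota big_distrr.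
apply: eq_bigr => j _; rewrite simsun_word_insert // -andbA.
by case: (simsun_word n w); rewrite /= ?mul1n ?mul0n.
Qed.

Lemma simsun_permutation n w : w \in permutations (iota 0 n) -> simsun_word n w ->
  [/\ all (fun y => y < n) w, ~~ double_descent w & size w = n].
Proof.
rewrite mem_permutations => wn sw; split; first exact: perm_iota_lt.
  exact: simsun_word_free sw.
by rewrite (perm_size wn) size_iota.
Qed.

Lemma Snk_rec n k :
  Snk n.+1 k = k.+1 * Snk n k + (if k is k'.+1 then (n - k'.*2) * Snk n k' else 0).
Proof.
have -> : Snk n.+1 k = \sum_(w <- permutations (iota 0 n)) simsun_word n w *
    ((k == descents w) * (descents w).+1 + (k == (descents w).+1) * (n - (descents w).*2)).
  rewrite SnkE count_simsun_insert; apply: eq_big_seq => w wp.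
  case: (boolP (simsun_word n w)) => sw; rewrite ?mul0n ?mul1n //.
  have [wx free w_size] := simsun_permutation wp sw.
  by rewrite insertions_descents // w_size.
case: k => [|k]; rewrite !SnkE /count_simsun !big_distrr ?addn0 -?big_split /=.
  by apply: eq_bigr => w _; case: (simsun_word n w); case: (descents w) => [|d] /=; lia.
by apply: eq_bigr => w _; case: (simsun_word n w) => /=; lia.
Qed.

Definition Sasc n k := count_simsun n (fun w => (descents w == k) && ~~ head_descent w).
Definition Sdsc n k := count_simsun n (fun w => (descents w == k) && head_descent w).

Lemma Snk_split n k : Snk n k = Sasc n k + Sdsc n k.
Proof.
rewrite SnkE /Sasc /Sdsc /count_simsun -big_split; apply: eq_bigr => w _.
by case: (simsun_word n w) (descents w == k) (head_descent w) => [] [] [].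
Qed.

Lemma Sdsc_rec n k : 0 < n -> Sdsc n.+1 k =
  k * Sdsc n k + (if k is k'.+1 then (n - k'.*2) * Sdsc n k' + Sasc n k' else 0).
Proof.
move=> n_gt0.
have -> : Sdsc n.+1 k = \sum_(w <- permutations (iota 0 n)) simsun_word n w *
    (if head_descent w
     then (k == descents w) * descents w + (k == (descents w).+1) * (n - (descents w).*2)
     else k == (descents w).+1).
  rewrite /Sdsc count_simsun_insert; apply: eq_big_seq => w wp.
  case: (boolP (simsun_word n w)) => sw; rewrite ?mul0n ?mul1n //.
  have [wx free w_size] := simsun_permutation wp sw.
  by rewrite insertions_head_descent ?w_size.
rewrite /Sdsc /Sasc /count_simsun; case: k => [|k].
  by rewrite big1 // => w _; case: (simsun_word n w) (head_descent w) => [] [] /=; lia.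
rewrite !big_distrr -!big_split; apply: eq_bigr => w _.
by case: (simsun_word n w) (head_descent w) => [] [] /=; lia.
Qed.

Lemma descents_gt0 w : head_descent w -> 0 < descents w.
Proof. by case: w => [|a s] // hw; rewrite descents_cons hw. Qed.

Lemma Sdsc0 n : Sdsc n 0 = 0.
Proof.
rewrite /Sdsc /count_simsun big1 // => w _.
case: (boolP (head_descent w)) => [/descents_gt0 d_gt0 | _]; last by rewrite !andbF.
by rewrite eqn0Ngt d_gt0 andbF.
Qed.

Lemma Snk_eq0 n k : n < k.*2 -> Snk n k = 0.
Proof.
move=> n_lt; rewrite SnkE /count_simsun big1_seq // => w /andP[_ wp].
case: (boolP (simsun_word n w)) => //= sw.
have [_ free w_size] := simsun_permutation wp sw.
suff -> : (descents w == k) = false by [].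
apply: negbTE; apply: contraTN n_lt => /eqP <-.
by rewrite -leqNgt -w_size descents_double_le.
Qed.

Lemma Sdsc_closed n k :
  Sdsc n.+1 k = if k is k'.+1 then (n - k'.*2) * Snk n k' else 0.
Proof.
case: k => [|k]; first exact: Sdsc0.
elim: n k => [|n IH] k.
  by rewrite /Sdsc /count_simsun big_cons big_nil.
have asc k' : Sasc n.+1 k' = k'.+1 * Snk n k'.
  apply: (@addIn (Sdsc n.+1 k')); rewrite -Snk_split Snk_rec.
  by case: k' => [|k']; rewrite ?Sdsc0 ?IH.
rewrite Sdsc_rec // IH [Snk n.+1 k]Snk_split !asc.
case: (ltnP n k.*2) => [/Snk_eq0 -> | le]; first by rewrite !muln0 !add0n addn0.
rewrite subSn //; set m := n - k.*2; lia.
Qed.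

Lemma Sasc_closed n k : Sasc n.+1 k = k.+1 * Snk n k.
Proof.
apply: (@addIn (Sdsc n.+1 k)); rewrite -Snk_split Snk_rec Sdsc_closed.
by case: k.
Qed.

Lemma peaks_add_head_descent w :
  uniq w -> ~~ double_descent w -> peaks w + head_descent w = descents w.
Proof.
elim: w => [|a w IH] //; case: w IH => [|b w] IH //.
case: w IH => [|c s] IH; first by rewrite /= !addn0.
rewrite double_descent_cons descents_cons => /andP[a_notin w_uniq] /norP[no_dd_head free].
rewrite -(IH w_uniq free).
have /eqP ab : a != b by apply: contraNneq a_notin => ->; rewrite mem_head.
rewrite -[peaks _]/(((a < b) && (c < b)) + peaks [:: b, c & s]).
rewrite -[head_descent (a :: _)]/(b < a) -[head_descent (b :: _)]/(c < b) in no_dd_head *.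
lia.
Qed.

Lemma Pnk_split n k : Pnk n k = Sasc n k + Sdsc n k.+1.
Proof.
rewrite PnkE /Sasc /Sdsc /count_simsun -big_split; apply: eq_big_seq => w wp /=.
case: (boolP (simsun_word n w)) => //= sw.
have [_ free _] := simsun_permutation wp sw.
have w_uniq : uniq w by move: wp; rewrite mem_permutations => /perm_uniq ->; exact: iota_uniq.
by have := peaks_add_head_descent w_uniq free; case: (head_descent w); lia.
Qed.

Lemma Pnk_closed n k : Pnk n.+1 k = (n.+1 - k) * Snk n k.
Proof.
rewrite Pnk_split Sasc_closed Sdsc_closed -mulnDl.
case: (ltnP n k.*2) => [/Snk_eq0 -> | le]; rewrite ?muln0 //.
by congr (_ * _); lia.
Qed.

Lemma Snk0 n : Snk n 0 = 1.
Proof.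
elim: n => [|n IH]; first by rewrite SnkE /count_simsun big_cons big_nil.
by rewrite Snk_rec IH.
Qed.

Lemma Snk1 n : Snk n 1 = 2 ^ n - n.+1.
Proof.
elim: n => [|n IH]; first by rewrite SnkE /count_simsun big_cons big_nil.
rewrite Snk_rec IH Snk0 expnS.
by have := @ltn_expl 2 n isT; lia.
Qed.

Lemma Pnk0 n : 0 < n -> Pnk n 0 = n.
Proof. by case: n => // n _; rewrite Pnk_closed Snk0 muln1. Qed.

Lemma Pnk1 n : 0 < n -> Pnk n 1 = (n - 1) * (2 ^ (n - 1) - n).
Proof. by case: n => // n _; rewrite Pnk_closed Snk1 subn1. Qed.

Local Open Scope ring_scope.

Lemma Ppoly_succ n : Ppoly n.+1 = n.+1%:R *: Spoly n - 'X * (Spoly n)^`().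
Proof.
apply/polyP => i; rewrite coefB coefZ coefXM coef_deriv !coef_poly.
case: i => [|i]; first by rewrite Pnk_closed subn0 /= subr0 natrM.
rewrite /= Pnk_closed; case: (ltnP i.+1 n.+1) => i_lt.
  rewrite (_ : (i.+1 < n.+2)%N = true); last by lia.
  by rewrite natrM natrB ?mulrBl ?[i.+1%:R * _]mulr_natl // ltnW.
rewrite mulr0 mul0rn subrr; case: ifP => // i_le.
have -> : i.+1 = n.+1 by lia.
by rewrite subnn.
Qed.

Lemma Pnk_rec n k : (1 <= n)%N -> (k <= n./2)%N ->
  ((Pnk n.+1 k)%:R : rat) =
    ((k.+1 * (n - k).+1)%N)%:R / (n - k)%:R * (Pnk n k)%:R
    + ((n - k.*2).+1)%:R * (Pprev n k)%:R.
Proof.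
(* Multiply the recurrence for S(m+1,k) by m+2-k and use P(m+2,k) = (m+2-k) S(m+1,k),
   P(m+1,k) = (m+1-k) S(m,k) and P(m+1,k-1) = (m+2-k) S(m,k-1). *)
case: n => [|m] // _ k_le.
have k2_le : (k.*2 <= m.+1)%N by move: k_le; rewrite -leq_double halfK; lia.
have mk_neq0 : (m.+1 - k)%:R != 0 :> rat by rewrite pnatr_eq0; lia.
rewrite [Pnk m.+1 k]Pnk_closed [X in _ / _ * X]natrM mulrA divfK // -!natrM -natrD.
rewrite Pnk_closed Snk_rec /Pprev; congr (_%:R).
case: k k_le k2_le {mk_neq0} => [|k] _ k2_le; first by rewrite !subn0; lia.
rewrite Pnk_closed.
have -> : ((m.+1 - k.+1.*2).+1 = m - k.*2)%N by lia.
have -> : ((m.+1 - k.+1).+1 = m - k.*2 + k.+1)%N by lia.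
have -> : (m.+2 - k.+1 = m - k.*2 + k.+1)%N by lia.
have -> : (m.+1 - k = m - k.*2 + k.+1)%N by lia.
set d := (m - k.*2)%N; lia.
Qed.

Theorem theorem6 :
  (forall n k : nat, (1 <= n)%N -> Pnk n.+1 k = ((n.+1 - k) * Snk n k)%N) /\
  (forall n : nat, (1 <= n)%N ->
     Ppoly n.+1 = (n.+1)%:R *: Spoly n - 'X * (Spoly n)^`()) /\
  (forall n k : nat, (1 <= n)%N -> (k <= n./2)%N ->
     ((Pnk n.+1 k)%:R : rat) =
       ((k.+1 * (n - k).+1)%N)%:R / (n - k)%:R * (Pnk n k)%:R
       + ((n - k.*2).+1)%:R * (Pprev n k)%:R) /\
  (forall n : nat, (1 <= n)%N ->
     Pnk n 0 = n /\ Pnk n 1 = ((n - 1) * (2 ^ (n - 1) - n))%N).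
Proof.
split; first by move=> n k _; exact: Pnk_closed.
split; first by move=> n _; exact: Ppoly_succ.
split; first exact: Pnk_rec.
by move=> n n_gt0; rewrite Pnk0 // Pnk1.
Qed.
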